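(* For $n\ge1$ and $k\ge1$, the number of plane trees with $n$ edges and exactly $k$ old leaves is $$\frac{2^{n-2k+1}}{k}\binom{n-1}{2k-2}\binom{2k-2}{k-1}.$$
   Context: A plane tree is a rooted tree in which the children of each vertex are linearly ordered (left to right). A leaf is a vertex with no children; by convention the tree consisting of a single vertex (no edges) has no leaves. A leaf is an old leaf if it is the leftmost child of its parent, and a young leaf otherwise. *)

From mathcomp Require Import all_boot all_order all_algebra.
From Stdlib Require List.
Set Implicit Arguments. Unset Strict Implicit. Unset Printing Implicit Defensive.

(* A plane tree: a root together with the ordered (left-to-right) list of
   subtrees hanging from its children. *)
Inductive ptree : Type := Node of seq ptree.

Definition children (t : ptree) : seq ptree := let: Node cs := t in cs.

Fixpoint edges (t : ptree) : nat :=
  let: Node cs := t in size cs + sumn (map edges cs).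

Definition leafb (t : ptree) : nat := if t is Node [::] then 1 else 0.

(* number of old leaves: leaves that are the leftmost child of their parent.
   The root is never a leaf (it is not a child), so the one-vertex tree has
   no leaves, as per the convention. *)
Fixpoint old_leaves (t : ptree) : nat :=
  let: Node cs := t in
  (if cs is c :: _ then leafb c else 0) + sumn (map old_leaves cs).

From HB Require Import structures.
From mathcomp Require Import all_boot all_order all_algebra zify ring.
From Stdlib Require List.

Set Implicit Arguments.
Unset Strict Implicit.
Unset Printing Implicit Defensive.

(* A tree with n >= 1 edges is a one-tree forest whose root has a child.
   Forests of r trees whose roots all have a child split, according to their
   first tree Node (c :: cs), into four families: the first tree is a single
   edge (one old leaf more), c is the only child of the root, the second child
   is a young leaf, or the second child has children and can be cut off as a
   tree of its own.  Hence the number F(n, r, k) of such forests with n edges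
   and k old leaves satisfies the Motzkin-path recurrence
     F(n+1, r+1, k) = F(n, r, k-1) + 2 F(n, r+1, k) + F(n, r+2, k),
   whose solution is the ballot-type formula n F(n, r, k) = r (n; k, b, u) 2^u
   with b = k - r and u = n + r - 2k.  For r = 1 this is the claimed count. *)

Lemma InP (T : eqType) (x : T) (s : seq T) : reflect (List.In x s) (x \in s).
Proof.
elim: s => [|y s IH] /=; first by constructor.
rewrite inE; apply: (iffP orP) => [[/eqP -> | /IH] | [-> | /IH]]; by [left | right].
Qed.

Lemma uniq_NoDup (T : eqType) (s : seq T) : uniq s -> List.NoDup s.
Proof.
elim: s => [|y s IH] /=; first by constructor.
by case/andP => ys /IH; constructor => // /InP; apply/negP.
Qed.

Lemma cat_uniq_sep (T : eqType) (sep : T -> nat) i (s1 s2 : seq T) :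
    {in s1, forall x, sep x = i} -> {in s2, forall x, sep x != i} ->
  uniq (s1 ++ s2) = uniq s1 && uniq s2.
Proof.
move=> s1i s2i; rewrite cat_uniq; congr (_ && _).
suff -> : ~~ has (mem s1) s2 by [].
by apply/hasPn => x /s2i; apply: contra => /s1i ->.
Qed.

Definition trinomial k b u := 'C(k + (b + u), k) * 'C(b + u, b).

Lemma trinomial_fact k b u : trinomial k b u * (k`! * (b`! * u`!)) = (k + (b + u))`!.
Proof.
have /[!addKn] eCbu := bin_fact (leq_addr u b).
have /[!addKn] eCk := bin_fact (leq_addr (b + u) k).
by rewrite /trinomial -eCk -eCbu; ring.
Qed.

Lemma fact3_gt0 k b u : 0 < k`! * (b`! * u`!).
Proof. by rewrite !muln_gt0 !fact_gt0. Qed.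

Lemma trinomialSl k b u : (k + (b + u)).+1 * trinomial k b u = k.+1 * trinomial k.+1 b u.
Proof.
apply/eqP; rewrite -(eqn_pmul2r (fact3_gt0 k b u)) -mulnA trinomial_fact -factS.
by rewrite -addSn -(trinomial_fact k.+1) factS; apply/eqP; ring.
Qed.

Lemma trinomialSm k b u : (k + (b + u)).+1 * trinomial k b u = b.+1 * trinomial k b.+1 u.
Proof.
apply/eqP; rewrite -(eqn_pmul2r (fact3_gt0 k b u)) -mulnA trinomial_fact -factS.
by rewrite -addnS -addSn -(trinomial_fact k b.+1) factS; apply/eqP; ring.
Qed.

Lemma trinomialSr k b u : (k + (b + u)).+1 * trinomial k b u = u.+1 * trinomial k b u.+1.
Proof.
apply/eqP; rewrite -(eqn_pmul2r (fact3_gt0 k b u)) -mulnA trinomial_fact -factS.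
by rewrite -!addnS -(trinomial_fact k b u.+1) factS; apply/eqP; ring.
Qed.

Lemma trinomial_catalan b u :
  b.+1 * trinomial b.+1 b u = (b.*2 + u).+1 * ('C(b.*2 + u, b.*2) * 'C(b.*2, b)).
Proof.
apply/eqP; rewrite -(eqn_pmul2r (fact3_gt0 b b u)); apply/eqP.
have /[!addKn] eCu := bin_fact (leq_addr u b.*2).
have /[!addKn] eCb := bin_fact (leq_addr b b).
rewrite -addnn in eCu *.
transitivity (trinomial b.+1 b u * (b.+1`! * (b`! * u`!))); first by rewrite factS; ring.
rewrite trinomial_fact.
transitivity ((b + b + u).+1 * ('C(b + b + u, b + b) * (('C(b + b, b) * (b`! * b`!)) * u`!))).
  by rewrite eCb eCu -factS; congr (_`!); lia.
by ring.
Qed.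

Definition ballot_weight (n r k : nat) : nat :=
  if (r <= k) && (2 * k <= n + r)
  then trinomial k (k - r) (n + r - 2 * k) * 2 ^ (n + r - 2 * k) else 0.

Lemma ballot_weightE n r k b u :
  k = r + b -> n = k + (b + u) -> ballot_weight n r k = trinomial k b u * 2 ^ u.
Proof.
move=> -> ->; rewrite /ballot_weight ifT; last by apply/andP; split; lia.
have -> : r + b + (b + u) + r - 2 * (r + b) = u by lia.
by rewrite addKn.
Qed.

Lemma ballot_weight_out n r k :
  ~~ ((r <= k) && (2 * k <= n + r)) -> ballot_weight n r k = 0.
Proof. by rewrite /ballot_weight => /negbTE ->. Qed.

Lemma ballot_weightSk n r k :
  n.+1 * ballot_weight n r k = k.+1 * ballot_weight n.+1 r.+1 k.+1.
Proof.
have [/andP [rk kn] | out] := boolP ((r <= k) && (2 * k <= n + r)); last first.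
  by rewrite !ballot_weight_out ?muln0 //; lia.
rewrite (@ballot_weightE n r k (k - r) (n + r - 2 * k)); try lia.
rewrite (@ballot_weightE n.+1 r.+1 k.+1 (k - r) (n + r - 2 * k)); try lia.
by rewrite mulnA [RHS]mulnA -trinomialSl; congr (_ * _ * _); lia.
Qed.

Lemma ballot_weightSu n r k :
  2 * n.+1 * ballot_weight n r.+1 k = (n.+2 + r - 2 * k) * ballot_weight n.+1 r.+1 k.
Proof.
have [/andP [rk kn] | out] := boolP ((r.+1 <= k) && (2 * k <= n.+1 + r.+1)); last first.
  by rewrite !ballot_weight_out ?muln0 //; lia.
case Hu: (n.+2 + r - 2 * k) => [|u].
  by rewrite mul0n ballot_weight_out ?muln0 //; lia.
rewrite (@ballot_weightE n r.+1 k (k - r.+1) u); try lia.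
rewrite (@ballot_weightE n.+1 r.+1 k (k - r.+1) u.+1); try lia.
rewrite expnS [RHS]mulnA -trinomialSr.
have -> : (k + (k - r.+1 + u)).+1 = n.+1 by lia.
ring.
Qed.

Lemma ballot_weightSb n r k :
  n.+1 * ballot_weight n r.+2 k = (k - r.+1) * ballot_weight n.+1 r.+1 k.
Proof.
have [/andP [rk kn] | out] := boolP ((r.+1 <= k) && (2 * k <= n.+1 + r.+1)); last first.
  by rewrite !ballot_weight_out ?muln0 //; lia.
case Hb: (k - r.+1) => [|b].
  by rewrite mul0n ballot_weight_out ?muln0 //; lia.
rewrite (@ballot_weightE n r.+2 k b (n + r.+2 - 2 * k)); try lia.
rewrite (@ballot_weightE n.+1 r.+1 k b.+1 (n + r.+2 - 2 * k)); try lia.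
by rewrite mulnA [RHS]mulnA -trinomialSm; congr (_ * _ * _); lia.
Qed.

Lemma ballot_weight_rec n r k :
  n.+1 * ((if k is k'.+1 then r * ballot_weight n r k' else 0)
          + 2 * (r.+1 * ballot_weight n r.+1 k) + r.+2 * ballot_weight n r.+2 k)
  = n * (r.+1 * ballot_weight n.+1 r.+1 k).
Proof.
set first := if k is k'.+1 then _ else _.
have first_shift : n.+1 * first = r * (k * ballot_weight n.+1 r.+1 k).
  by rewrite /first; clear first; case: k => [|k]; rewrite ?muln0 // mulnCA ballot_weightSk.
transitivity (n.+1 * first + r.+1 * (2 * n.+1 * ballot_weight n r.+1 k)
              + r.+2 * (n.+1 * ballot_weight n r.+2 k)); first ring.
rewrite first_shift ballot_weightSu ballot_weightSb.
have [/andP [rk kn] | out] := boolP ((r.+1 <= k) && (2 * k <= n.+1 + r.+1)); last first.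
  by rewrite !ballot_weight_out ?muln0.
rewrite !mulnA -!mulnDl; congr (_ * _); nia.
Qed.

Fixpoint ptree_to_gentree (t : ptree) : GenTree.tree unit :=
  let: Node cs := t in GenTree.Node 0 (map ptree_to_gentree cs).

Fixpoint gentree_to_ptree (g : GenTree.tree unit) : ptree :=
  if g is GenTree.Node _ gs then Node (map gentree_to_ptree gs) else Node [::].

Fixpoint ptree_to_gentreeK (t : ptree) : gentree_to_ptree (ptree_to_gentree t) = t :=
  let: Node cs := t in
  f_equal Node ((fix mapK cs : map gentree_to_ptree (map ptree_to_gentree cs) = cs :=
    if cs is c :: cs' then f_equal2 cons (ptree_to_gentreeK c) (mapK cs') else erefl) cs).

HB.instance Definition _ :=
  Countable.copy ptree (pcan_type (can_pcan ptree_to_gentreeK)).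

Notation leaf := (Node [::]).
Notation edge_tree := (Node [:: leaf]).

Definition has_child (t : ptree) : bool := children t != [::].

Definition plant_head (f : seq ptree) : seq ptree :=
  if f is t :: f' then Node [:: t] :: f' else f.

Definition sprout_head (f : seq ptree) : seq ptree :=
  if f is Node (c :: cs) :: f' then Node (c :: leaf :: cs) :: f' else f.

Definition graft_head (f : seq ptree) : seq ptree :=
  if f is Node (c :: cs) :: t :: f' then Node (c :: t :: cs) :: f' else f.

Fixpoint forests (n r : nat) : seq (seq ptree) :=
  match n, r with
  | 0, 0 => [:: [::]]
  | n.+1, r.+1 =>
      map (cons edge_tree) (forests n r) ++ map plant_head (forests n r.+1)
      ++ map sprout_head (forests n r.+1) ++ map graft_head (forests n r.+2)
  | _, _ => [::]
  end.

Definition is_forest (n r : nat) (f : seq ptree) : bool :=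
  [&& size f == r, all has_child f & sumn (map edges f) == n].

Lemma mem_forests n r f : (f \in forests n r) = is_forest n r f.
Proof.
rewrite /is_forest; elim: n r f => [|n IH] [|r] f /=.
- by case: f.
- by case: f => [|[[|c cs]] f]; rewrite in_nil //= ?addSn /= !andbF.
- by case: f.
rewrite !mem_cat; apply/idP/idP.
- case/or4P=> /mapP [g]; rewrite IH => /and3P [/eqP sz hc /eqP ed] ->.
  + by rewrite /= sz hc ed !eqxx.
  + case: g sz hc ed => // t g /= [->] /andP [_ ->] ed.
    by rewrite eqxx /=; apply/eqP; lia.
  + case: g sz hc ed => // -[[|c cs]] g //= [->] -> ed.
    by rewrite eqxx /=; apply/eqP; lia.
  + case: g sz hc ed => // -[[|c cs]] [|t g] //= [->] /andP [_ ->] ed.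
    by rewrite eqxx /=; apply/eqP; lia.
case: f => [|[[|c [|d cs]]] f] //=; first by rewrite andbF.
all: rewrite eqSS => /and3P [sz hc /eqP ed].
- apply/or4P; case: c ed => -[|c' cs'] /= ed.
  + by constructor 1; apply/mapP; exists f; rewrite // IH sz hc /=; apply/eqP; lia.
  + constructor 2; apply/mapP; exists (Node (c' :: cs') :: f) => //.
    by rewrite IH /= !eqSS sz hc /=; apply/eqP; lia.
- apply/or4P; case: d ed => -[|d' ds'] /= ed.
  + constructor 3; apply/mapP; exists (Node (c :: cs) :: f) => //.
    by rewrite IH /= !eqSS sz hc /=; apply/eqP; lia.
  + constructor 4; apply/mapP; exists (Node (c :: cs) :: Node (d' :: ds') :: f) => //.
    by rewrite IH /= !eqSS sz hc /=; apply/eqP; lia.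
Qed.

Lemma forestsP n r f : f \in forests n r -> size f = r /\ all has_child f.
Proof. by rewrite mem_forests => /and3P [/eqP]. Qed.

Definition head_shape (f : seq ptree) : nat :=
  match f with
  | edge_tree :: _ => 0
  | Node [:: _] :: _ => 1
  | Node [:: _, leaf & _] :: _ => 2
  | _ => 3
  end.

Lemma forests_uniq n r : uniq (forests n r).
Proof.
elim: n r => [|n IH] [|r] //=.
have shape0 : {in map (cons edge_tree) (forests n r), forall f, head_shape f = 0}.
  by move=> f /mapP [g _ ->].
have shape1 : {in map plant_head (forests n r.+1), forall f, head_shape f = 1}.
  by move=> f /mapP [g /forestsP [sz hc] ->]; case: g sz hc => //= -[[|c cs]] g.
have shape2 : {in map sprout_head (forests n r.+1), forall f, head_shape f = 2}.
  move=> f /mapP [g /forestsP [sz hc] ->].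
  by case: g sz hc => //= -[[|c cs]] g //= _ _; case: c => -[].
have shape3 : {in map graft_head (forests n r.+2), forall f, head_shape f = 3}.
  move=> f /mapP [g /forestsP [sz hc] ->].
  by case: g sz hc => //= -[[|c cs]] [|[[|d ds]] g] //= _ _; case: c => -[].
rewrite (cat_uniq_sep shape0); last first.
  by move=> f; rewrite !mem_cat => /or3P [/shape1 | /shape2 | /shape3] ->.
rewrite (cat_uniq_sep shape1); last by move=> f; rewrite mem_cat => /orP [/shape2 | /shape3] ->.
rewrite (cat_uniq_sep shape2); last by move=> f /shape3 ->.
rewrite !map_inj_in_uniq ?IH // => g g' /forestsP [sz hc] /forestsP [sz' hc'].
- case: g g' sz sz' hc hc' => [|[[|c cs]] [|d g]] [|[[|c' cs']] [|d' g']] //= _ _ _ _.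
  by case=> -> -> -> ->.
- case: g g' sz sz' hc hc' => [|[[|c cs]] g] [|[[|c' cs']] g'] //= _ _ _ _.
  by case=> -> -> ->.
- by case: g g' sz sz' {hc hc'} => [|t g] [|t' g'] // _ _ [-> ->].
- by case=> ->.
Qed.

Definition forest_old_leaves (f : seq ptree) : nat := sumn (map old_leaves f).

Definition forest_count (n r k : nat) : nat :=
  count (fun f => forest_old_leaves f == k) (forests n r).

Lemma forest_count_rec n r k :
  forest_count n.+1 r.+1 k =
    (if k is k'.+1 then forest_count n r k' else 0)
    + 2 * forest_count n r.+1 k + forest_count n r.+2 k.
Proof.
rewrite /forest_count /= !count_cat !count_map mul2n -addnn !addnA.
congr (_ + _ + _ + _).
- case: k => [|k]; last exact: eq_count.
  by rewrite (@eq_count _ _ pred0) ?count_pred0.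
- apply: eq_in_count => g /forestsP [sz hc] /=.
  by case: g sz hc => //= -[[|c cs]] g //= _ _; rewrite /forest_old_leaves /= addn0.
- apply: eq_in_count => g /forestsP [sz hc] /=.
  by case: g sz hc => //= -[[|c cs]] g.
- apply: eq_in_count => g /forestsP [sz hc] /=.
  case: g sz hc => //= -[[|c cs]] [|[[|d ds]] g] //= _ _.
  by rewrite /forest_old_leaves /= !addnA; congr (_ == _); lia.
Qed.

Lemma forest_count_ballot n r k : n * forest_count n r k = r * ballot_weight n r k.
Proof.
elim: n r k => [|n IH] r k.
  rewrite mul0n /ballot_weight; case: ifP => [/andP [rk kn] | _]; last by rewrite muln0.
  by have -> : r = 0 by lia.
case: r => [|r]; first by rewrite /forest_count /= muln0.
case: n IH => [|n] IH.
  rewrite mul1n /forest_count /=; case: r => [|r] /=.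
    case: k => [|[|k]] //; rewrite ballot_weight_out //; lia.
  by rewrite ballot_weight_out ?muln0 //; lia.
apply/eqP; rewrite -(eqn_pmul2l (ltn0Sn n)); apply/eqP.
rewrite -ballot_weight_rec mulnCA forest_count_rec; congr (_ * _).
rewrite 2!mulnDr (mulnCA n.+1 2) !IH.
by case: k => [|k]; rewrite ?muln0 ?IH.
Qed.

Lemma tree_count_binomial n k : 0 < n -> 0 < k ->
  k * forest_count n 1 k = 'C(n.-1, 2 * k - 2) * 'C(2 * k - 2, k.-1) * 2 ^ (n.+1 - 2 * k).
Proof.
move=> n_gt0 k_gt0; apply/eqP.
rewrite -(eqn_pmul2l n_gt0) mulnCA forest_count_ballot mul1n; apply/eqP.
have [/andP [_ kn] | out] := boolP ((1 <= k) && (2 * k <= n + 1)); last first.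
  by rewrite ballot_weight_out // bin_small ?muln0 //; lia.
have [b kE] : exists b, k = b.+1 by exists k.-1; lia.
have [u nE] : exists u, n = (b.*2 + u).+1 by exists (n - (b.*2).+1); lia.
rewrite (@ballot_weightE _ _ _ b u); try lia.
subst k n; rewrite mulnA trinomial_catalan /=.
have -> : 2 * b.+1 - 2 = b.*2 by lia.
have -> : (b.*2 + u).+2 - 2 * b.+1 = u by lia.
by rewrite !mulnA.
Qed.

Definition trees_with_old_leaves (n k : nat) : seq ptree :=
  [seq head leaf f | f <- forests n 1 & forest_old_leaves f == k].

Lemma forests_one n f : f \in forests n 1 -> f = [:: head leaf f].
Proof. by case/forestsP; case: f => [|t [|]]. Qed.

Lemma mem_trees_with_old_leaves n k t : 0 < n ->
  (t \in trees_with_old_leaves n k) = (edges t == n) && (old_leaves t == k).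
Proof.
move=> n_gt0; apply/mapP/andP => [[f] | [/eqP tn tk]].
  rewrite mem_filter => /andP [fk f_in] ->.
  have fE := forests_one f_in; move: fk f_in.
  rewrite fE mem_forests /forest_old_leaves /is_forest /=.
  by rewrite !addn0 andbT => -> /andP [_ ->].
exists [:: t] => //; rewrite mem_filter /forest_old_leaves /= addn0 tk mem_forests.
rewrite /is_forest /= tn addn0 eqxx !andbT; case: t tn {tk} => -[|c cs] //= tn.
by rewrite -tn in n_gt0.
Qed.

Lemma trees_with_old_leaves_uniq n k : uniq (trees_with_old_leaves n k).
Proof.
rewrite map_inj_in_uniq ?filter_uniq ?forests_uniq // => f g.
rewrite !mem_filter => /andP [_ /forests_one fE] /andP [_ /forests_one gE] fg.
by rewrite fE gE fg.
Qed.

Lemma size_trees_with_old_leaves n k : size (trees_with_old_leaves n k) = forest_count n 1 k.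
Proof. by rewrite size_map size_filter. Qed.

Import GRing.Theory Num.Theory.
Local Open Scope ring_scope.

Theorem mainTheorem3 (n k : nat) (hn : (1 <= n)%N) (hk : (1 <= k)%N) :
  exists s : seq ptree,
    List.NoDup s /\
    (forall t : ptree, List.In t s <-> (edges t = n /\ old_leaves t = k)) /\
    (size s)%:R =
      (2 : rat) ^ (n%:Z - (2 * k)%:Z + 1) / k%:R
        * 'C(n.-1, (2 * k - 2)%N)%:R * 'C((2 * k - 2)%N, k.-1)%:R.
Proof.
exists (trees_with_old_leaves n k); split; [|split].
- exact/uniq_NoDup/trees_with_old_leaves_uniq.
- move=> t; split => [/InP | [tn tk]].
    by rewrite mem_trees_with_old_leaves // => /andP [/eqP ? /eqP ?].
  by apply/InP; rewrite mem_trees_with_old_leaves // tn tk !eqxx.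
have count_k := tree_count_binomial hn hk.
rewrite size_trees_with_old_leaves.
have [kn | nk] := leqP (2 * k) n.+1; last first.
  have C0 : 'C(n.-1, 2 * k - 2) = 0%N by rewrite bin_small //; lia.
  rewrite C0 !mul0n in count_k *.
  have -> : forest_count n 1 k = 0%N by nia.
  by rewrite mulr0 mul0r.
have -> : n%:Z - (2 * k)%:Z + 1 = (n.+1 - 2 * k)%N by lia.
have k_neq0 : k%:R != 0 :> rat by rewrite pnatr_eq0 -lt0n.
apply: (mulfI k_neq0); rewrite -exprnP -natrM count_k !natrM natrX.
by field.
Qed.
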